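(* Let $X$ and $\Theta$ be compact metric spaces, let $\tau:\Theta\times X\to X$, $(\theta,x)\mapsto \tau_\theta(x)$, be continuous, and let $q=(q_x)_{x\in X}$ be a family of finite positive Borel measures on $\Theta$ such that $\sup_{x} q_x(\Theta)<\infty$, $\inf_{x} q_x(\Theta)>0$, $x\mapsto q_x(A)$ is Borel measurable for each Borel $A\subseteq\Theta$, and $x\mapsto q_x$ is weak-$*$ continuous. Let $B_q:C(X,\mathbb{R})\to C(X,\mathbb{R})$ be given by $B_q(f)(x)=\int_\Theta f(\tau_\theta(x))\,dq_x(\theta)$. Suppose there exist a number $\rho>0$ and a strictly positive continuous function $h:X\to\mathbb{R}$ with $B_q(h)=\rho h$. Then the limit \[ \lim_{N\to\infty}\frac1N\ln\big(B_q^N(1)(x)\big)=\ln\rho \] exists, the convergence is uniform in $x\in X$, and $\rho$ equals the spectral radius of $B_q$ acting on $C(X,\mathbb{R})$.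
   Context: $C(X,\mathbb{R})$ carries the supremum norm; the spectral radius is taken for $B_q$ as a bounded linear operator on this Banach space. *)

From HB Require Import structures.
From mathcomp Require Import all_boot all_order all_algebra.
From mathcomp Require Import all_classical all_reals all_analysis.
From mathcomp Require Import measurable_realfun.
Set Implicit Arguments. Unset Strict Implicit. Unset Printing Implicit Defensive.
Import Order.TTheory GRing.Theory Num.Theory.
Import numFieldNormedType.Exports.
Local Open Scope classical_set_scope.
Local Open Scope ring_scope.

#[short(type="pmetricType")]
HB.structure Definition PointedMetric (K : numDomainType) :=
  { M of Pointed M & Metric K M }.

Definition borel (T : ptopologicalType) := g_sigma_algebraType (@open T).

Section Defs.
Variables (R : realType) (X : ptopologicalType).

Definition Bq (Theta : ptopologicalType)
  (tau : Theta * X -> X) (q : X -> {measure set (borel Theta) -> \bar R})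
  (f : X -> R) : X -> R :=
  fun x => Rintegral (q x) [set: borel Theta] (fun th : borel Theta => f (tau (th, x))).

(* Spectrum of a (real-)linear operator T on C(X,R), computed through the
   complexification C(X,R) (+) i C(X,R) = C(X,C): a + i b is in the spectrum iff
   (a + i b) Id - T_C is not bijective on C(X,C), where
   T_C (f + i g) = T f + i T g. (Bounded inverse is automatic by the open
   mapping theorem.) *)
Definition in_spectrum (T : (X -> R) -> (X -> R)) (a b : R) : Prop :=
  ~ (forall u v : X -> R, continuous u -> continuous v ->
       exists! fg : (X -> R) * (X -> R),
         (continuous fg.1 /\ continuous fg.2) /\
         ((fun x => a * fg.1 x - b * fg.2 x - T fg.1 x) = u /\
          (fun x => b * fg.1 x + a * fg.2 x - T fg.2 x) = v)).

Definition spectral_radius (T : (X -> R) -> (X -> R)) : R :=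
  sup [set Num.sqrt (ab.1 ^+ 2 + ab.2 ^+ 2) | ab in [set ab : R * R | in_spectrum T ab.1 ab.2]].

End Defs.

(* Since h > 0 is continuous on a compact space, every continuous f satisfies
   |f| <= K h, and positivity of B gives |B^n f| <= K rho^n h.  Sandwiching 1
   between two multiples of h pins B^n 1 between two multiples of rho^n, which
   gives the logarithmic growth rate.  As h is an eigenvector, rho lies in the
   spectrum.  For |lambda| > rho, positivity makes B non-expanding for the
   pointwise complex modulus, so lambda^-1 B contracts the h-weighted modulus by
   rho / |lambda| < 1: the equation lambda w = B w forces w = 0, and the
   iteration w <- lambda^-1 (u + B w) converges uniformly to a solution of
   lambda w - B w = u.  Hence no point of modulus > rho is in the spectrum. *)

From HB Require Import structures.
From mathcomp Require Import all_boot all_order all_algebra.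
From mathcomp Require Import all_classical all_reals all_analysis.
From mathcomp Require Import measurable_realfun.
From mathcomp Require Import ring lra.
Import Order.TTheory GRing.Theory Num.Theory.
Import numFieldNormedType.Exports.
Local Open Scope classical_set_scope.
Local Open Scope ring_scope.

Section GeometricBounds.
Context {R : realType}.
Implicit Types (C D e r z : R).

Lemma geometric_lt D {r e} : 0 <= r < 1 -> 0 < e -> exists n, D * r ^+ n < e.
Proof.
move=> /andP[r0 r1] e0.
have D_r_cvg0 : (fun n => D * r ^+ n) @ \oo --> 0.
  rewrite -(mulr0 D); apply: cvgM; first exact: cvg_cst.
  by apply: cvg_expr; rewrite ger0_norm.
move/cvgrPdist_lt : D_r_cvg0 => /(_ e e0) [N _ HN].
exists N; have := HN N (leqnn N); rewrite /= sub0r normrN.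
exact: le_lt_trans (ler_norm _).
Qed.

Lemma geometric_bound_eq0 D {r z} : 0 <= r < 1 ->
  (forall n, `|z| <= D * r ^+ n) -> z = 0.
Proof.
move=> r01 zD; apply/normr0_eq0/eqP; rewrite eq_le normr_ge0 andbT.
rewrite leNgt; apply/negP => z_gt0.
have [n Dn] := geometric_lt D r01 z_gt0.
by have := lt_le_trans Dn (zD n); rewrite ltxx.
Qed.

Lemma geometric_telescope (u : nat -> R) C r : 0 <= r < 1 ->
  (forall n, `|u n.+1 - u n| <= C * r ^+ n) ->
  forall n m, (n <= m)%N -> `|u m - u n| <= C / (1 - r) * r ^+ n.
Proof.
move=> /andP[r0 r1] du n m nm.
have r1_gt0 : 0 < 1 - r by rewrite subr_gt0.
have C0 : 0 <= C by have := du 0%N; rewrite expr0 mulr1; exact: le_trans.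
suff tail : forall k, `|u (n + k)%N - u n| <= C / (1 - r) * (r ^+ n - r ^+ (n + k)).
  have := tail (m - n)%N; rewrite subnKC // => /le_trans; apply.
  apply: ler_wpM2l; first exact: divr_ge0 C0 (ltW r1_gt0).
  by rewrite lerBlDr lerDl exprn_ge0.
move=> k; elim: k => [|k IH]; first by rewrite addn0 !subrr normr0 mulr0.
have -> : u (n + k.+1)%N - u n = (u (n + k)%N - u n) + (u (n + k).+1 - u (n + k)%N).
  by rewrite addnS; ring.
apply: le_trans (ler_normD _ _) _; apply: le_trans (lerD IH (du _)) _.
have -> : C / (1 - r) * (r ^+ n - r ^+ (n + k)) + C * r ^+ (n + k) =
    C / (1 - r) * (r ^+ n - r ^+ (n + k.+1)).
  by rewrite addnS exprS; field; rewrite gt_eqF.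
exact: lexx.
Qed.

Lemma uniform_log_rate (T : Type) (u : nat -> T -> R) (m M r : R) :
  0 < m -> 0 < r -> (forall n x, m * r ^+ n <= u n x <= M * r ^+ n) ->
  forall e, 0 < e -> exists N0 : nat, forall N : nat, (N0 <= N)%N ->
    forall x, `|N%:R^-1 * ln (u N x) - ln r| < e.
Proof.
move=> m0 r0 u_bnd.
pose L := `|ln m| + `|ln M|.
have ln_dev n x : `|ln (u n x) - n%:R * ln r| <= L.
  have /andP[lo up] := u_bnd n x.
  have rn0 : 0 < r ^+ n by rewrite exprn_gt0.
  have u0 : 0 < u n x by apply: lt_le_trans lo; rewrite mulr_gt0.
  have M0 : 0 < M by rewrite -(pmulr_lgt0 _ rn0); exact: lt_le_trans up.
  have := lo; rewrite -ler_ln ?posrE ?mulr_gt0 // lnM ?posrE // lnXn //.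
  have := up; rewrite -ler_ln ?posrE ?mulr_gt0 // lnM ?posrE // lnXn //.
  move=> l2 l1; rewrite -mulr_natl in l1 l2; rewrite ler_norml /L.
  have := ler_norm (- ln m); have := normr_ge0 (ln m).
  have := ler_norm (ln M); have := normr_ge0 (ln M).
  rewrite normrN => *; apply/andP; split; lra.
move=> e e0; exists (Num.truncn (L / e)).+1 => N hN x.
have L0 : 0 <= L by rewrite addr_ge0.
have LN : L / e < N%:R.
  by apply: lt_le_trans (truncnS_gt _) _; rewrite ler_nat.
have N0 : 0 < N%:R :> R by apply: le_lt_trans LN; rewrite divr_ge0 // ltW.
have -> : N%:R^-1 * ln (u N x) - ln r = N%:R^-1 * (ln (u N x) - N%:R * ln r).
  by field; rewrite gt_eqF.
rewrite normrM ger0_norm ?invr_ge0 ?ltW //.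
apply: le_lt_trans (ler_wpM2l _ (ln_dev N x)) _; first by rewrite invr_ge0 ltW.
by rewrite mulrC ltr_pdivrMr // mulrC -ltr_pdivrMr.
Qed.
End GeometricBounds.

Section CompactSpace.
Context {R : realType} {T : topologicalType}.
Hypothesis cT : compact [set: T].

Lemma compact_continuous_bounded (f : T -> R) : continuous f ->
  exists2 M, 0 < M & forall x, `|f x| <= M.
Proof.
move=> cf; have : compact (f @` [set: T]).
  by apply: continuous_compact => //; exact: continuous_subspaceT.
move=> /compact_bounded [M [_ HM]]; exists (`|M| + 1) => [|x].
  by rewrite ltr_pwDr.
by apply: HM; [rewrite ltr_pwDr // ler_norm | exists x].
Qed.

Lemma compact_continuous_gt0_lbound (f : T -> R) : continuous f ->
  (forall x, 0 < f x) -> exists2 m, 0 < m & forall x, m <= f x.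
Proof.
move=> cf f_gt0.
have cVf : continuous (fun x => (f x)^-1).
  by move=> x; apply: continuousV; [rewrite gt_eqF | exact: cf].
have [K K_gt0 HK] := compact_continuous_bounded _ cVf.
exists K^-1 => [|x]; first by rewrite invr_gt0.
have := HK x; rewrite gtr0_norm ?invr_gt0 // => Vf_le.
by rewrite -(invrK (f x)) lef_pV2 ?posrE ?invr_gt0.
Qed.
End CompactSpace.

Lemma continuous_geometric_limit {R : realType} {T : topologicalType}
    {F : nat -> T -> R} {C r : R} : 0 <= r < 1 ->
  (forall n, continuous (F n)) ->
  (forall n x, `|F n.+1 x - F n x| <= C * r ^+ n) ->
  exists2 G : T -> R, continuous G &
    forall n x, `|G x - F n x| <= C / (1 - r) * r ^+ n.
Proof.
move=> r01 cF dF; set D := C / (1 - r).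
have cauchyF x n m : (n <= m)%N -> `|F m x - F n x| <= D * r ^+ n.
  exact: (geometric_telescope (F ^~ x)).
have cvgF x : cvg (F ^~ x @ \oo).
  apply/cauchy_cvgP/cauchy_exP => e e0.
  have [N DN] := geometric_lt D r01 e0.
  exists (F N x); exists N => // m /= Nm.
  by rewrite /ball /= distrC; exact: le_lt_trans (cauchyF x N m Nm) DN.
pose G x := lim (F ^~ x @ \oo).
have G_F n x : `|G x - F n x| <= D * r ^+ n.
  have : (fun m => `|F m x - F n x|) @ \oo --> `|G x - F n x|.
    by apply: cvg_norm; apply: cvgB; [exact: cvgF | exact: cvg_cst].
  by move/cvgr_to_le; apply; exists n => // m /=; exact: cauchyF.
exists G => // x; apply/cvgrPdist_lt => e e0.
have e3_gt0 : 0 < e / 3 by rewrite divr_gt0.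
have [n Dn] := geometric_lt D r01 e3_gt0.
move/cvgrPdist_lt : (cF n x) => /(_ _ e3_gt0); apply: filterS => y Fxy.
have -> : G x - G y = (G x - F n x) + (F n x - F n y) - (G y - F n y) by ring.
rewrite [e](_ : _ = e / 3 + e / 3 + e / 3); last by field.
apply: le_lt_trans (ler_normB _ _) _; apply: ltr_leD; last first.
  exact: le_trans (G_F n y) (ltW Dn).
apply: le_lt_trans (ler_normD _ _) _.
by apply: ler_ltD => //; exact: le_trans (G_F n x) (ltW Dn).
Qed.

Section ComplexModulus.
Context {R : rcfType}.
Implicit Types (a b c s u v : R).

(* The modulus of u + i v; as in [in_spectrum], a complex-valued function is a
   pair of real ones, and (a * u - b * v, b * u + a * v) is (a + i b)(u + i v). *)
Definition cnorm u v := Num.sqrt (u ^+ 2 + v ^+ 2).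

Lemma cnorm_ge0 u v : 0 <= cnorm u v.
Proof. exact: sqrtr_ge0. Qed.

Lemma cnormM a b u v : cnorm (a * u - b * v) (b * u + a * v) = cnorm a b * cnorm u v.
Proof.
rewrite /cnorm -sqrtrM ?addr_ge0 ?sqr_ge0 //; congr Num.sqrt; ring.
Qed.

Lemma ler_cnorml u v : `|u| <= cnorm u v.
Proof. by rewrite -sqrtr_sqr ler_sqrt ?addr_ge0 ?sqr_ge0 // lerDl sqr_ge0. Qed.

Lemma ler_cnormr u v : `|v| <= cnorm u v.
Proof. by rewrite -sqrtr_sqr ler_sqrt ?addr_ge0 ?sqr_ge0 // lerDr sqr_ge0. Qed.

Lemma cnorm_eq0 u v : cnorm u v = 0 -> u = 0 /\ v = 0.
Proof.
move=> uv0; have := ler_cnorml u v; have := ler_cnormr u v; rewrite uv0.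
by rewrite !normr_le0 => /eqP -> /eqP ->.
Qed.

Lemma ler_dot_cnorm c s u v : c * u + s * v <= cnorm c s * cnorm u v.
Proof.
rewrite /cnorm -sqrtrM ?addr_ge0 ?sqr_ge0 //.
apply: le_trans (ler_norm _) _; rewrite -sqrtr_sqr ler_sqrt ?mulr_ge0 ?addr_ge0 ?sqr_ge0 //.
have -> : (c ^+ 2 + s ^+ 2) * (u ^+ 2 + v ^+ 2) = (c * u + s * v) ^+ 2 + (c * v - s * u) ^+ 2.
  by ring.
by rewrite lerDl sqr_ge0.
Qed.
End ComplexModulus.

Section RealContinuity.
Context {R : realType} {T : topologicalType}.
Implicit Types (a b c : R) (f g : T -> R).

Lemma continuousMl c {f} : continuous f -> continuous (fun y => c * f y).
Proof. by move=> cf y; apply: cvgM; [exact: cvg_cst | exact: cf]. Qed.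

Lemma continuous_lincomb a b {f g} : continuous f -> continuous g ->
  continuous (fun y => a * f y + b * g y).
Proof. by move=> cf cg y; apply: cvgD; exact: continuousMl. Qed.

Lemma continuous_sub {f g} : continuous f -> continuous g ->
  continuous (fun y => f y - g y).
Proof. by move=> cf cg y; apply: cvgB; [exact: cf | exact: cg]. Qed.

Lemma continuous_cnorm {f g} : continuous f -> continuous g ->
  continuous (fun y => cnorm (f y) (g y)).
Proof.
move=> cf cg y.
apply: (@continuous_comp _ _ _ (fun y => f y ^+ 2 + g y ^+ 2) Num.sqrt).
  by apply: cvgD; apply: cvgM; [exact: cf | exact: cf | exact: cg | exact: cg].
exact: sqrt_continuous.
Qed.
End RealContinuity.

Lemma cnorm_inv {R : rcfType} (a b : R) : 0 < cnorm a b ->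
  cnorm (a / (a ^+ 2 + b ^+ 2)) (- b / (a ^+ 2 + b ^+ 2)) = (cnorm a b)^-1.
Proof.
rewrite /cnorm sqrtr_gt0 => d_gt0.
rewrite -sqrtrV ?ltW //; congr Num.sqrt; field; exact: lt0r_neq0.
Qed.

Section PositiveOperator.
Context {R : realType} {X : ptopologicalType}.
Hypothesis cX : compact [set: X].
Context {B : (X -> R) -> X -> R}.
Hypothesis B_cont : forall {f : X -> R}, continuous f -> continuous (B f).
Hypothesis B_lin : forall (a b : R) {f g : X -> R}, continuous f -> continuous g ->
  B (fun y => a * f y + b * g y) = (fun x => a * B f x + b * B g x).
Hypothesis B_mono : forall {f g : X -> R}, continuous f -> continuous g ->
  (forall y, f y <= g y) -> forall x, B f x <= B g x.
Context {rho : R} {h : X -> R}.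
Implicit Types (f g : X -> R) (c : R).
Hypotheses (rho_gt0 : 0 < rho) (ch : continuous h) (h_gt0 : forall x, 0 < h x).
Hypothesis B_h : forall x, B h x = rho * h x.

Lemma B_scale c f x : continuous f -> B (fun y => c * f y) x = c * B f x.
Proof.
move=> cf; have := B_lin c 0 cf cf.
have -> : (fun y => c * f y + 0 * f y) = (fun y => c * f y).
  by apply: funext => y; rewrite mul0r addr0.
by move=> ->; rewrite mul0r addr0.
Qed.

Lemma B_sub {f g} x : continuous f -> continuous g ->
  B (fun y => f y - g y) x = B f x - B g x.
Proof.
move=> cf cg; have := B_lin 1 (-1) cf cg.
have -> : (fun y => 1 * f y + -1 * g y) = (fun y => f y - g y).
  by apply: funext => y; rewrite mul1r mulN1r.
by move=> ->; rewrite mul1r mulN1r.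
Qed.

Lemma B_eigen c x : B (fun y => c * h y) x = c * rho * h x.
Proof. by rewrite B_scale // B_h mulrA. Qed.

Lemma B_ge0 f : continuous f -> (forall y, 0 <= f y) -> forall x, 0 <= B f x.
Proof.
move=> cf f_ge0 x.
have := B_mono (continuousMl 0 ch) cf _ x; rewrite B_eigen !mul0r; apply=> y.
by rewrite mul0r.
Qed.

Lemma iter_B_cont n f : continuous f -> continuous (iter n B f).
Proof. by move=> cf; elim: n => //= n IH; exact: B_cont. Qed.

Lemma iter_B_mono n {f g} : continuous f -> continuous g ->
  (forall y, f y <= g y) -> forall x, iter n B f x <= iter n B g x.
Proof.
move=> cf cg fg; elim: n => //= n IH x.
by apply: B_mono => //; exact: iter_B_cont.
Qed.

Lemma iter_B_eigen n c : iter n B (fun y => c * h y) = (fun x => c * rho ^+ n * h x).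
Proof.
elim: n => [|n IH] /=; first by apply: funext => x; rewrite expr0 mulr1.
by rewrite IH; apply: funext => x; rewrite B_eigen exprSr mulrA.
Qed.

Lemma eigen_dominates {f} : continuous f ->
  exists2 K, 0 <= K & forall y, `|f y| <= K * h y.
Proof.
move=> cf; have [M M_gt0 fM] := compact_continuous_bounded cX _ cf.
have [m m_gt0 hm] := compact_continuous_gt0_lbound cX _ ch h_gt0.
exists (M / m) => [|y]; first by rewrite divr_ge0 // ltW.
apply: le_trans (fM y) _.
rewrite -[M in M <= _](divfK (lt0r_neq0 m_gt0)).
by apply: ler_wpM2l; [rewrite divr_ge0 // ltW | exact: hm].
Qed.

Lemma iter_B_one_bounds : exists2 m, 0 < m &
  exists M, forall n x, m * rho ^+ n <= iter n B (fun _ => 1) x <= M * rho ^+ n.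
Proof.
have [M M_gt0 hM] := compact_continuous_bounded cX _ ch.
have [m m_gt0 hm] := compact_continuous_gt0_lbound cX _ ch h_gt0.
have hM' x : h x <= M by exact: le_trans (ler_norm _) (hM x).
have c1 : continuous (fun _ : X => 1 : R) by move=> ?; exact: cvg_cst.
exists (m / M); first by rewrite divr_gt0.
exists (M / m) => n x; have rn_ge0 : 0 <= rho ^+ n by rewrite exprn_ge0 // ltW.
have /(iter_B_mono n (continuousMl _ ch) c1) lo : forall y, M^-1 * h y <= 1.
  by move=> y; rewrite ler_pdivrMl // mulr1.
have /(iter_B_mono n c1 (continuousMl _ ch)) up : forall y, 1 <= m^-1 * h y.
  by move=> y; rewrite ler_pdivlMl // mulr1.
rewrite iter_B_eigen in lo; rewrite iter_B_eigen in up.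
apply/andP; split.
  have -> : m / M * rho ^+ n = M^-1 * rho ^+ n * m by ring.
  apply: le_trans (lo x); apply: ler_wpM2l => //.
  by rewrite mulr_ge0 // invr_ge0 ltW.
have -> : M / m * rho ^+ n = m^-1 * rho ^+ n * M by ring.
apply: le_trans (up x) _; apply: ler_wpM2l => //.
by rewrite mulr_ge0 // invr_ge0 ltW.
Qed.

Lemma B_cnorm {f g} : continuous f -> continuous g ->
  forall x, cnorm (B f x) (B g x) <= B (fun y => cnorm (f y) (g y)) x.
Proof.
move=> cf cg x; set c := B f x; set s := B g x.
have cfg := continuous_cnorm cf cg.
have [c0|c_gt0] := eqVneq (cnorm c s) 0.
  by rewrite c0; apply: B_ge0 => // y; exact: cnorm_ge0.
have dot : c * B f x + s * B g x <= cnorm c s * B (fun y => cnorm (f y) (g y)) x.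
  rewrite -[c * _ + _]/((fun x => c * B f x + s * B g x) x) -B_lin // -B_scale //.
  apply: B_mono => [||y]; [exact: continuous_lincomb | exact: continuousMl |].
  exact: ler_dot_cnorm.
have cs_gt0 : 0 < cnorm c s by rewrite lt_def c_gt0 cnorm_ge0.
rewrite -(ler_pM2l cs_gt0); apply: le_trans dot.
by rewrite -expr2 sqr_sqrtr ?addr_ge0 ?sqr_ge0 // !expr2.
Qed.

Lemma subeigen_eq0 {f s} : continuous f -> (forall y, 0 <= f y) -> rho < s ->
  (forall x, s * f x <= B f x) -> forall x, f x = 0.
Proof.
move=> cf f_ge0 rho_s sf_le x.
have s_gt0 : 0 < s by exact: lt_trans rho_s.
have r01 : 0 <= rho / s < 1 by rewrite divr_ge0 ?ltW //= ltr_pdivrMr // mul1r.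
have [K K_ge0 fK] := eigen_dominates cf.
have decay n y : f y <= K * (rho / s) ^+ n * h y.
  elim: n y => [|n IH] y; first by rewrite expr0 mulr1 (le_trans (ler_norm _)).
  rewrite -(ler_pM2l s_gt0); apply: le_trans (sf_le y) _.
  apply: le_trans (B_mono cf (continuousMl _ ch) IH y) _.
  suff -> : s * (K * (rho / s) ^+ n.+1 * h y) = K * (rho / s) ^+ n * rho * h y.
    by rewrite B_eigen.
  by rewrite exprSr; field; exact: lt0r_neq0.
apply: (geometric_bound_eq0 (K * h x) r01) => n.
by rewrite ger0_norm // mulrAC; exact: decay.
Qed.

Lemma cmul_B_eq0 {a b f g} : rho < cnorm a b -> continuous f -> continuous g ->
  (forall x, a * f x - b * g x = B f x) -> (forall x, b * f x + a * g x = B g x) ->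
  forall x, f x = 0 /\ g x = 0.
Proof.
move=> rho_ab cf cg Bf Bg x; apply: cnorm_eq0.
apply: (subeigen_eq0 (continuous_cnorm cf cg) _ rho_ab) => [y|y].
  exact: cnorm_ge0.
by rewrite -cnormM Bf Bg; exact: B_cnorm.
Qed.

Lemma B_bounded : exists2 C, 0 <= C & forall f c, continuous f ->
  (forall y, `|f y| <= c) -> forall x, `|B f x| <= C * c.
Proof.
have [M M_gt0 hM] := compact_continuous_bounded cX _ ch.
have [m m_gt0 hm] := compact_continuous_gt0_lbound cX _ ch h_gt0.
exists (rho * M / m) => [|f c cf fc x]; first by rewrite divr_ge0 ?mulr_ge0 ?ltW.
have c_ge0 : 0 <= c by exact: le_trans (normr_ge0 _) (fc x).
have fh y : `|f y| <= c / m * h y.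
  by apply: le_trans (fc y) _; rewrite mulrAC ler_pdivlMr // ler_wpM2l.
have lo : B (fun y => - (c / m) * h y) x <= B f x.
  by apply: B_mono => [||y]; [exact: continuousMl | by [] | rewrite mulNr lerNnormlW].
have up : B f x <= B (fun y => c / m * h y) x.
  by apply: B_mono => [||y]; [by [] | exact: continuousMl | exact: le_trans (ler_norm _) (fh y)].
rewrite !B_eigen in lo up.
have bnd : c / m * rho * h x <= rho * M / m * c.
  rewrite [rho * M / m * c](_ : _ = c / m * rho * M); last by ring.
  apply: ler_wpM2l; first by rewrite mulr_ge0 ?divr_ge0 // ltW.
  exact: le_trans (ler_norm _) (hM x).
rewrite ler_norml; apply/andP; split; last exact: le_trans up bnd.
by rewrite lerNl (le_trans _ bnd) // lerNl -mulNr -mulNr.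
Qed.

Lemma cnorm_cmul_B_le al be {f g c} : continuous f -> continuous g ->
  (forall y, cnorm (f y) (g y) <= c * h y) ->
  forall x, cnorm (al * B f x - be * B g x) (be * B f x + al * B g x) <=
    cnorm al be * (c * rho) * h x.
Proof.
move=> cf cg fg_le x; rewrite cnormM -mulrA; apply: ler_wpM2l; first exact: cnorm_ge0.
apply: le_trans (B_cnorm cf cg x) _; rewrite -B_eigen.
exact: B_mono (continuous_cnorm cf cg) (continuousMl _ ch) fg_le x.
Qed.

Lemma cmul_B_limit {c s D r f g} {F G : nat -> X -> R} {u : X -> R} :
  0 <= r < 1 -> continuous f -> (forall n, continuous (F n)) ->
  (forall n y, `|f y - F n y| <= D * r ^+ n) ->
  (forall n y, `|g y - G n y| <= D * r ^+ n) ->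
  (forall n x, c * F n.+1 x - s * G n.+1 x - B (F n) x = u x) ->
  forall x, c * f x - s * g x - B f x = u x.
Proof.
move=> /[dup] r01 /andP[r_ge0 r_lt1] cf cF fF gG FG x.
have [C C_ge0 BC] := B_bounded.
have D_ge0 : 0 <= D by have := fF 0%N x; rewrite expr0 mulr1; exact: le_trans.
have rSn n : D * r ^+ n.+1 <= D * r ^+ n.
  by rewrite ler_wpM2l // exprSr ler_piMr ?exprn_ge0 // ltW.
apply/eqP; rewrite -subr_eq0; apply/eqP.
apply: (geometric_bound_eq0 ((`|c| + `|s| + C) * D) r01) => n.
have -> : c * f x - s * g x - B f x - u x =
    c * (f x - F n.+1 x) - s * (g x - G n.+1 x) - (B f x - B (F n) x).
  by rewrite -(FG n x); ring.
rewrite -(B_sub _ cf (cF n)) !mulrDl -mulrA -[`|s| * D * _]mulrA -[C * D * _]mulrA.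
apply: le_trans (ler_normB _ _) _.
apply: lerD; last exact: BC _ _ (continuous_sub cf (cF n)) (fF n) x.
apply: le_trans (ler_normB _ _) _; rewrite !normrM.
by apply: lerD; apply: ler_wpM2l => //; exact: le_trans (rSn n).
Qed.

(* With (al, be) the inverse of (a, b), this is w_(n+1) = (a + i b)^-1 ((u, v) + B w_n). *)
Fixpoint resolvent_iter (al be : R) (u v : X -> R) (n : nat) : (X -> R) * (X -> R) :=
  if n is n'.+1 then
    let w := resolvent_iter al be u v n' in
    (fun x => al * (u x + B w.1 x) - be * (v x + B w.2 x),
     fun x => be * (u x + B w.1 x) + al * (v x + B w.2 x))
  else (fun _ => 0, fun _ => 0).

Section ResolventIteration.
Variables (al be : R) (u v : X -> R).
Hypotheses (cu : continuous u) (cv : continuous v).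
Local Notation w := (resolvent_iter al be u v).

Lemma resolvent_iter_cont n : continuous (w n).1 /\ continuous (w n).2.
Proof.
have c0 : continuous (fun _ : X => 0 : R) by move=> ?; exact: cvg_cst.
elim: n => [|n [c1 c2]] //=.
have cuB : continuous (fun x => u x + B (w n).1 x).
  by move=> x; apply: cvgD; [exact: cu | exact: B_cont].
have cvB : continuous (fun x => v x + B (w n).2 x).
  by move=> x; apply: cvgD; [exact: cv | exact: B_cont].
split; last exact: continuous_lincomb.
by apply: continuous_sub; exact: continuousMl.
Qed.

Lemma resolvent_iter_step_bound : exists2 K, 0 <= K & forall n y,
  cnorm ((w n.+1).1 y - (w n).1 y) ((w n.+1).2 y - (w n).2 y) <=
    K * (cnorm al be * rho) ^+ n * h y.
Proof.
have cw1 n : continuous (w n).1 by have [] := resolvent_iter_cont n.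
have cw2 n : continuous (w n).2 by have [] := resolvent_iter_cont n.
have [K K_ge0 HK] := eigen_dominates
  (continuous_cnorm (continuous_sub (cw1 1%N) (cw1 0%N)) (continuous_sub (cw2 1%N) (cw2 0%N))).
exists K => // n; elim: n => [|n IH] y.
  by rewrite expr0 mulr1 (le_trans (ler_norm _) (HK y)).
have := cnorm_cmul_B_le al be (continuous_sub (cw1 n.+1) (cw1 n))
  (continuous_sub (cw2 n.+1) (cw2 n)) IH y.
rewrite (B_sub _ (cw1 n.+1) (cw1 n)) (B_sub _ (cw2 n.+1) (cw2 n)) exprSr.
set P := B (w n.+1).1 y - B (w n).1 y; set Q := B (w n.+1).2 y - B (w n).2 y.
have -> : (w n.+2).1 y - (w n.+1).1 y = al * P - be * Q by rewrite /P /Q /=; ring.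
have -> : (w n.+2).2 y - (w n.+1).2 y = be * P + al * Q by rewrite /P /Q /=; ring.
by rewrite mulrCA -!mulrA.
Qed.

Lemma resolvent_iter_cauchy : 0 <= cnorm al be * rho -> exists C, forall n y,
  `|(w n.+1).1 y - (w n).1 y| <= C * (cnorm al be * rho) ^+ n /\
  `|(w n.+1).2 y - (w n).2 y| <= C * (cnorm al be * rho) ^+ n.
Proof.
move=> r_ge0; have [K K_ge0 dK] := resolvent_iter_step_bound.
have [H _ hH] := compact_continuous_bounded cX _ ch.
exists (K * H) => n y.
have dH : K * (cnorm al be * rho) ^+ n * h y <= K * H * (cnorm al be * rho) ^+ n.
  rewrite mulrAC; apply: ler_wpM2r; first exact: exprn_ge0.
  by apply: ler_wpM2l => //; exact: le_trans (ler_norm _) (hH y).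
by split; apply: le_trans (le_trans (dK n y) dH); [exact: ler_cnorml | exact: ler_cnormr].
Qed.

Lemma resolvent_iter_eq a b n y : a * al - b * be = 1 -> a * be + b * al = 0 ->
  a * (w n.+1).1 y - b * (w n.+1).2 y - B (w n).1 y = u y /\
  a * (w n.+1).2 y - (- b) * (w n.+1).1 y - B (w n).2 y = v y.
Proof.
move=> inv_re inv_im /=; set P := u y + _; set Q := v y + _; split.
  transitivity ((a * al - b * be) * P - (a * be + b * al) * Q - B (w n).1 y); first ring.
  by rewrite inv_re inv_im /P; ring.
transitivity ((a * be + b * al) * P + (a * al - b * be) * Q - B (w n).2 y); first ring.
by rewrite inv_re inv_im /Q; ring.
Qed.

End ResolventIteration.

Lemma cmul_B_surjective {a b u v} : rho < cnorm a b -> continuous u -> continuous v ->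
  exists f g, [/\ continuous f, continuous g,
    forall x, a * f x - b * g x - B f x = u x &
    forall x, b * f x + a * g x - B g x = v x].
Proof.
move=> rho_ab cu cv; have ab_gt0 : 0 < cnorm a b := lt_trans rho_gt0 rho_ab.
have d_neq0 : a ^+ 2 + b ^+ 2 != 0 by rewrite gt_eqF // -sqrtr_gt0.
set al := a / (a ^+ 2 + b ^+ 2); set be := - b / (a ^+ 2 + b ^+ 2).
have inv_re : a * al - b * be = 1 by rewrite /al /be; field.
have inv_im : a * be + b * al = 0 by rewrite /al /be; field.
have r01 : 0 <= cnorm al be * rho < 1.
  by rewrite cnorm_inv // mulr_ge0 ?invr_ge0 ?ltW //= mulrC ltr_pdivrMr // mul1r.
have /andP[r_ge0 _] := r01.
have cw n := resolvent_iter_cont al be u v cu cv n.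
have [C dw] := resolvent_iter_cauchy al be u v cu cv r_ge0.
have [f cf fw] := continuous_geometric_limit r01 (fun n => (cw n).1) (fun n y => (dw n y).1).
have [g cg gw] := continuous_geometric_limit r01 (fun n => (cw n).2) (fun n y => (dw n y).2).
have w_eq n y := resolvent_iter_eq al be u v a b n y inv_re inv_im.
exists f, g; split => // x.
  exact: (cmul_B_limit r01 cf (fun n => (cw n).1) fw gw (fun n y => (w_eq n y).1)).
have -> : b * f x + a * g x - B g x = a * g x - (- b) * f x - B g x by ring.
exact: (cmul_B_limit r01 cg (fun n => (cw n).2) gw fw (fun n y => (w_eq n y).2)).
Qed.

Lemma not_in_spectrum a b : rho < cnorm a b -> ~ in_spectrum B a b.
Proof.
move=> rho_ab; apply=> u v cu cv.
have [f [g [cf cg ef eg]]] := cmul_B_surjective rho_ab cu cv.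
exists (f, g); split; first by split; [split | split; apply: funext].
case=> f' g' /= [[cf' cg'] [ef' eg']].
have dre x : a * (f x - f' x) - b * (g x - g' x) = B (fun y => f y - f' y) x.
  apply/eqP; rewrite B_sub // -subr_eq0; apply/eqP.
  transitivity ((a * f x - b * g x - B f x) - (a * f' x - b * g' x - B f' x)); first ring.
  by rewrite ef -ef' subrr.
have dim x : b * (f x - f' x) + a * (g x - g' x) = B (fun y => g y - g' y) x.
  apply/eqP; rewrite B_sub // -subr_eq0; apply/eqP.
  transitivity ((b * f x + a * g x - B g x) - (b * f' x + a * g' x - B g' x)); first ring.
  by rewrite eg -eg' subrr.
have fg0 := cmul_B_eq0 rho_ab (continuous_sub cf cf') (continuous_sub cg cg') dre dim.
by congr pair; apply: funext => x; apply/eqP; rewrite -subr_eq0; apply/eqP; apply fg0.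
Qed.

Lemma in_spectrum_eigenvalue : in_spectrum B rho 0.
Proof.
have c0 : continuous (fun _ : X => 0 : R) by move=> ?; exact: cvg_cst.
move=> /(_ _ _ c0 c0) [[f g] [_ uniq_sol]].
have B0 x : B (fun _ => 0) x = 0.
  by rewrite -[fun _ => 0](funext (fun y => mul0r (h y))) B_eigen !mul0r.
have sol0 := uniq_sol (fun _ => 0, fun _ => 0).
have solh := uniq_sol (h, fun _ => 0).
have : (h, fun _ : X => 0 : R) = (fun _ => 0, fun _ => 0).
  rewrite -solh ?sol0 //; split=> //; split; apply: funext => x /=; rewrite ?B0 ?B_h; ring.
by move=> [/(congr1 (fun F => F point))] /eqP; rewrite gt_eqF.
Qed.

Lemma spectral_radius_eigenvalue : rho = spectral_radius B.
Proof.
rewrite /spectral_radius; set S := [set _ | _ in _].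
have rhoS : S rho.
  exists (rho, 0); first exact: in_spectrum_eigenvalue.
  by rewrite /= expr0n addr0 sqrtr_sqr gtr0_norm.
have ubS : ubound S rho.
  move=> _ [[a b] /= ab_spec <-]; rewrite leNgt; apply/negP => rho_ab.
  exact: not_in_spectrum rho_ab ab_spec.
apply/eqP; rewrite eq_le; apply/andP; split; last by apply: ge_sup => //; exists rho.
by apply: sup_upper_bound => //; split; exists rho.
Qed.

End PositiveOperator.

Lemma compact_near_uniform {R : realType} {T U : topologicalType}
    {g : T * U -> R} (x0 : U) {e : R} :
  compact [set: T] -> continuous g -> 0 < e ->
  \forall x \near x0, forall t, `|g (t, x) - g (t, x0)| < e.
Proof.
move=> /compact_near_coveringP cT cg e_gt0.
have e2_gt0 : 0 < e / 2 by rewrite divr_gt0.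
suff : \forall x \near x0, [set: T] `<=` (fun t => `|g (t, x) - g (t, x0)| < e).
  by apply: filterS => x + t; apply.
apply: cT => t _.
move/cvgrPdist_lt : (cg (t, x0)) => /(_ _ e2_gt0) [[V W] /= [Vt Wx0] VW].
exists (V, W) => // -[t' x] /= [Vt' Wx].
have d1 := VW (t', x) (conj Vt' Wx).
have d2 := VW (t', x0) (conj Vt' (nbhs_singleton Wx0)).
have -> : g (t', x) - g (t', x0) = (g (t, x0) - g (t', x0)) - (g (t, x0) - g (t', x)).
  by ring.
by apply: le_lt_trans (ler_normB _ _) _; rewrite (splitr e) ltrD.
Qed.

Section BorelIntegration.
Context {R : realType} {T : ptopologicalType}.
Hypothesis cT : compact [set: T].
Context {mu : {measure set (borel T) -> \bar R}}.
Hypothesis mufin : (mu [set: borel T] < +oo)%E.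

Lemma continuous_borel_measurable (g : T -> R) : continuous g ->
  measurable_fun [set: borel T] (g : borel T -> R).
Proof.
move=> cg; apply: (measurability _ (RGenOInfty.measurableE R)) => //.
move=> _ [_ [x ->] <-]; rewrite setTI; apply: sub_sigma_algebra.
apply: open_comp; first by move=> y _; exact: cg.
by rewrite set_itvoy; exact: open_gt.
Qed.

Lemma continuous_integrable {g : T -> R} : continuous g ->
  mu.-integrable [set: borel T] (EFin \o (g : borel T -> R)).
Proof.
move=> cg; apply: measurable_bounded_integrable => //.
  exact: continuous_borel_measurable.
have [M _ gM] := compact_continuous_bounded cT _ cg.
exists M; split; first by rewrite num_real.
by move=> y My t _; rewrite /= (le_trans (gM t)) // ltW.
Qed.

Lemma Rintegral_norm_le {g : T -> R} {c : R} : continuous g ->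
  (forall t, `|g t| <= c) ->
  `|Rintegral mu [set: borel T] (g : borel T -> R)| <= c * fine (mu [set: borel T]).
Proof.
move=> cg gc; have ig := continuous_integrable cg.
apply: le_trans (le_normr_Rintegral _ ig) _ => //.
rewrite -Rintegral_cst //; apply: le_Rintegral => //.
  by apply: continuous_integrable => t; apply: cvg_norm; exact: cg.
exact: continuous_integrable (fun _ => cvg_cst c).
Qed.
End BorelIntegration.

Section TransferOperator.
Context {R : realType} {X Theta : ptopologicalType}.
Hypothesis cTheta : compact [set: Theta].
Context {tau : Theta * X -> X} {q : X -> {measure set (borel Theta) -> \bar R}}.
Hypothesis ctau : continuous tau.
Hypothesis qfin : forall x, (q x [set: borel Theta] < +oo)%E.
Context {M : R}.
Hypothesis qsup : forall x, (q x [set: borel Theta] <= M%:E)%E.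
Hypothesis qweak : forall {f : Theta -> R}, continuous f ->
  continuous (fun x : X => Rintegral (q x) [set: borel Theta] (f : borel Theta -> R)).
Implicit Types (f g : X -> R).

Local Notation B := (Bq tau q).
Local Notation I mu g := (Rintegral mu [set: borel Theta] (g : borel Theta -> R)).

Lemma continuous_along_tau {f} x : continuous f -> continuous (fun t => f (tau (t, x))).
Proof.
move=> cf t; apply: continuous_comp; last exact: cf.
apply: continuous_comp; last exact: ctau.
by apply: cvg_pair => /=; [exact: cvg_id | exact: cvg_cst].
Qed.

Lemma Bq_lin a b f g : continuous f -> continuous g ->
  B (fun y => a * f y + b * g y) = (fun x => a * B f x + b * B g x).
Proof.
move=> cf cg; apply: funext => x; rewrite /Bq.
have cf' := continuous_along_tau x cf; have cg' := continuous_along_tau x cg.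
have int := continuous_integrable cTheta (qfin x).
rewrite RintegralD // ?int //; try exact: continuousMl.
by rewrite !RintegralZl // int.
Qed.

Lemma Bq_mono f g : continuous f -> continuous g ->
  (forall y, f y <= g y) -> forall x, B f x <= B g x.
Proof.
move=> cf cg fg x; apply: le_Rintegral => //;
  by apply: continuous_integrable => //; exact: continuous_along_tau.
Qed.

Lemma Bq_cont f : continuous f -> continuous (B f).
Proof.
move=> cf x0; apply/cvgrPdist_lt => e e_gt0.
have mass_le x : fine (q x [set: borel Theta]) <= M.
  by rewrite -lee_fin fineK ?ge0_fin_numE ?qfin ?qsup.
have M1_gt0 : 0 < M + 1.
  by have := mass_le x0; have := fine_ge0 (measure_ge0 (q x0) [set: borel Theta]); lra.
have e2_gt0 : 0 < e / 2 by rewrite divr_gt0.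
have e2M_gt0 : 0 < e / 2 / (M + 1) by rewrite divr_gt0.
have cf_tau : continuous (fun p => f (tau p)).
  by move=> p; apply: continuous_comp; [exact: ctau | exact: cf].
have near_tau := compact_near_uniform x0 cTheta cf_tau e2M_gt0.
move/cvgrPdist_lt : (qweak (continuous_along_tau x0 cf) x0) => /(_ _ e2_gt0) near_q.
apply: filterS2 near_tau near_q => x tau_x q_x; rewrite /Bq.
set g0 := fun t => f (tau (t, x0)); set gx := fun t => f (tau (t, x)).
have cg0 : continuous g0 by exact: continuous_along_tau.
have cgx : continuous gx by exact: continuous_along_tau.
have int := continuous_integrable cTheta (qfin x).
have gx_g0 : `|I (q x) g0 - I (q x) gx| <= e / 2.
  rewrite -RintegralB ?int //.
  have g_le t : `|g0 t - gx t| <= e / 2 / (M + 1) by rewrite distrC; exact: ltW (tau_x t).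
  apply: le_trans (Rintegral_norm_le cTheta (qfin x) (continuous_sub cg0 cgx) g_le) _.
  rewrite -[leRHS](divfK (lt0r_neq0 M1_gt0)); apply: ler_wpM2l; first exact: ltW.
  by have := mass_le x; lra.
have -> : I (q x0) g0 - I (q x) gx = (I (q x0) g0 - I (q x) g0) + (I (q x) g0 - I (q x) gx).
  by ring.
apply: le_lt_trans (ler_normD _ _) _.
by rewrite (splitr e); exact: ltr_leD q_x gx_g0.
Qed.
End TransferOperator.

Theorem mainTheorem2 (R : realType) (X Theta : pmetricType R)
  (cX : compact [set: X]) (cTheta : compact [set: Theta])
  (tau : Theta * X -> X) (ctau : continuous tau)
  (q : X -> {measure set (borel Theta) -> \bar R})
  (qfin : forall x, (q x [set: borel Theta] < +oo)%E)
  (qsup : exists M : R, forall x, (q x [set: borel Theta] <= M%:E)%E)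
  (qinf : exists c : R, 0 < c /\ forall x, (c%:E <= q x [set: borel Theta])%E)
  (qmeas : forall A : set (borel Theta), measurable A ->
     measurable_fun [set: borel X] ((fun x : borel X => q x A) : borel X -> \bar R))
  (qweak : forall f : Theta -> R, continuous f ->
     continuous (fun x : X => Rintegral (q x) [set: borel Theta] (f : borel Theta -> R)))
  (rho : R) (rho_gt0 : 0 < rho)
  (h : X -> R) (ch : continuous h) (h_gt0 : forall x, 0 < h x)
  (heig : forall x, Bq tau q h x = rho * h x) :
  (forall e : R, 0 < e -> exists N0 : nat, forall N : nat, (N0 <= N)%N ->
     forall x : X,
       `| N%:R^-1 * ln (iter N (Bq tau q) (fun _ => 1) x) - ln rho| < e)
  /\ rho = spectral_radius (Bq tau q).
Proof.
have [M qM] := qsup.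
have B_cont := Bq_cont cTheta ctau qfin qM qweak.
have B_lin := Bq_lin cTheta ctau qfin.
have B_mono := Bq_mono cTheta ctau qfin.
have [m m_gt0 [M' B1_bounds]] :=
  iter_B_one_bounds cX B_cont B_lin B_mono rho_gt0 ch h_gt0 heig.
split; first exact: uniform_log_rate m_gt0 rho_gt0 B1_bounds.
exact (spectral_radius_eigenvalue cX B_cont B_lin B_mono rho_gt0 ch h_gt0 heig).
Qed.
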